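(* Let $d\ge0$ and $n>d$ be integers and let $T,T'\in L(n,d)$ with $T<T'$. Then for each $T_i\in T$ there exists a unique $T'_j\in T'$ such that $T'_j\subset T_i$.
   Context: For a finite set $X$ let $\operatorname{codim}_d(X)=d+1-|X|$. For a finite collection $\{T_1,\dots,T_l\}$ of pairwise distinct finite sets put $\rho_d(\{T_1,\dots,T_l\})=\sum_{i=1}^l\operatorname{codim}_d(T_i)$ (with $\rho_d(\emptyset)=0$) and $D_d(\{T_1,\dots,T_l\})=\operatorname{codim}_d(T_1\cap\cdots\cap T_l)-\rho_d(\{T_1,\dots,T_l\})$. For integers $d\ge0$, $n>d$, $L(n,d)$ is the set of all collections $T$ of subsets of $\{1,\dots,n\}$ such that (i) $D_d(T')>0$ for every $T'\subset T$ with $|T'|>1$, and (ii) $0\le|T_i|\le d$ for every $T_i\in T$. It is partially ordered by: $T<T'$ iff $\rho_d(T)<\rho_d(T')$ and for every $T_i\in T$ there exists $T'_j\in T'$ with $T'_j\subset T_i$. *)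

From mathcomp Require Import all_boot all_order all_algebra.
Set Implicit Arguments. Unset Strict Implicit. Unset Printing Implicit Defensive.
Import GRing.Theory Num.Theory.
Local Open Scope ring_scope.

(* Ground set {1,...,n} is modelled by 'I_n = {0,...,n-1}.
   A collection of pairwise distinct subsets is a {set {set 'I_n}}. *)

Definition codim (n d : nat) (X : {set 'I_n}) : int :=
  (d.+1)%:Z - (#|X|)%:Z.

Definition rho (n d : nat) (T : {set {set 'I_n}}) : int :=
  \sum_(X in T) codim d X.

Definition Dd (n d : nat) (T : {set {set 'I_n}}) : int :=
  codim d (\bigcap_(X in T) X) - rho d T.

Definition inL (n d : nat) (T : {set {set 'I_n}}) : Prop :=
  (forall T' : {set {set 'I_n}}, T' \subset T -> (1 < #|T'|)%N -> 0 < Dd d T')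
  /\ (forall X, X \in T -> (#|X| <= d)%N).

Definition Lt (n d : nat) (T T' : {set {set 'I_n}}) : Prop :=
  rho d T < rho d T' /\
  (forall Ti, Ti \in T -> exists2 Tj, Tj \in T' & Tj \subset Ti).

From mathcomp Require Import all_boot all_order all_algebra.
From mathcomp Require Import ring zify.

(* Condition (i) applied to a pair {X, Y} says exactly that |X ∪ Y| > d, since
   D_d({X, Y}) = |X| + |Y| - |X ∩ Y| - (d + 1).  Two members of T' contained in
   the same T_i, which has at most d elements, therefore coincide; existence is
   part of the definition of T < T'. *)

Set Implicit Arguments. Unset Strict Implicit. Unset Printing Implicit Defensive.
Import GRing.Theory Num.Theory.
Local Open Scope ring_scope.

Lemma Dd_pair (n d : nat) (X Y : {set 'I_n}) :
  X != Y -> Dd d [set X; Y] = (#|X :|: Y|)%:Z - (d.+1)%:Z.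
Proof.
move=> neqXY.
have XnotinY : X \notin [set Y] by rewrite inE.
rewrite /Dd /rho big_setU1 //= big_set1 big_setU1 //= big_set1 /codim.
have cardU : (#|X :|: Y|)%:Z = (#|X|)%:Z + (#|Y|)%:Z - (#|X :&: Y|)%:Z.
  by rewrite -!PoszD -cardsUI PoszD addrK.
by rewrite cardU; ring.
Qed.

Lemma inL_card_setU (n d : nat) (T : {set {set 'I_n}}) (X Y : {set 'I_n}) :
  inL d T -> X \in T -> Y \in T -> X != Y -> (d < #|X :|: Y|)%N.
Proof.
move=> [DdT_gt0 _] XT YT neqXY.
have pairT : [set X; Y] \subset T.
  by apply/subsetP => Z; rewrite !inE => /orP [] /eqP ->.
have := DdT_gt0 _ pairT; rewrite cards2 neqXY Dd_pair // => /(_ isT).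
lia.
Qed.

Lemma inL_uniq_subset (n d : nat) (T : {set {set 'I_n}}) (A X Y : {set 'I_n}) :
  inL d T -> (#|A| <= d)%N -> X \in T -> Y \in T ->
  X \subset A -> Y \subset A -> X = Y.
Proof.
move=> LT cardA XT YT XA YA; apply/eqP; apply: contraTT cardA => neqXY.
rewrite -ltnNge; apply: leq_trans (inL_card_setU LT XT YT neqXY) _.
by apply: subset_leq_card; rewrite subUset XA YA.
Qed.

Theorem proposition3p3 (d n : nat) (hdn : (d < n)%N)
  (T T' : {set {set 'I_n}}) (hT : inL d T) (hT' : inL d T') (hlt : Lt d T T') :
  forall Ti, Ti \in T -> exists! Tj, Tj \in T' /\ Tj \subset Ti.
Proof.
move=> Ti TiT.
have [Tj TjT' TjTi] := hlt.2 Ti TiT.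
exists Tj; split=> // B [BT' BTi].
exact: inL_uniq_subset hT' (hT.2 Ti TiT) TjT' BT' TjTi BTi.
Qed.
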